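(* Let $k_1,\dots,k_m$ and $r_1,\dots,r_n$ be positive integers. Then $L_{k_1}\times\cdots\times L_{k_m}\equiv L_{r_1}\times\cdots\times L_{r_n}$ if and only if $m=n$ and there is a permutation $\gamma$ of $\{1,\dots,m\}$ with $k_i=r_{\gamma(i)}$ for all $i$ (i.e. the two products consist of exactly the same devices).
   Context: An abstract storage device (ASD) is a pair $D=(\mathcal{S}_D,\mathcal{P}_D)$, $\mathcal{S}_D$ a finite set and $\mathcal{P}_D$ a finite family of partitions of $\mathcal{S}_D$. The kernel of a function $f$ is the partition of its domain into the nonempty fibers $f^{-1}(y)$. The binary linear device $L_n$ has state space $\{0,1\}^n$ and partition set consisting of the kernels of all $\mathbb{F}_2$-linear maps $\{0,1\}^n\to\{0,1\}$. For a partition $\pi$ of $\mathcal{S}'$ and $\phi:\mathcal{S}\to\mathcal{S}'$, $\pi\circ\phi$ is the partition of $\mathcal{S}$ with $x,y$ in the same block iff $\phi(x),\phi(y)$ are in the same block of $\pi$; $\pi\preceq\rho$ means every block of $\pi$ lies in a block of $\rho$. $D\le D'$ means there exist $\phi:\mathcal{S}_D\to\mathcal{S}_{D'}$, $\alpha:\mathcal{P}_D\to\mathcal{P}_{D'}$ with $\alpha(\pi)\circ\phi\preceq\pi$ for all $\pi\in\mathcal{P}_D$; $D\equiv D'$ means $D\le D'$ and $D'\le D$. The direct product $D\times D'$ has state space $\mathcal{S}_D\times\mathcal{S}_{D'}$ and partition set $\{\pi\times\pi':\pi\in\mathcal{P}_D,\pi'\in\mathcal{P}_{D'}\}$ with $\pi\times\pi'=\{B\times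 B':B\in\pi,B'\in\pi'\}$. *)

From HB Require Import structures.
From mathcomp Require Import all_boot all_order all_algebra all_fingroup.
Set Implicit Arguments. Unset Strict Implicit. Unset Printing Implicit Defensive.
Import GRing.Theory.
Local Open Scope ring_scope.

(* An abstract storage device: a finite state space and a finite family of
   partitions of it (each partition is a set of blocks). *)
Record asd := ASD { st : finType ; parts : {set {set {set st}}} }.

Definition kernel (S T : finType) (f : S -> T) : {set {set S}} :=
  [set [set y | f y == f x] | x : S].

Definition pcomp (S S' : finType) (pi : {set {set S'}}) (phi : S -> S')
  : {set {set S}} := kernel (fun x => pblock pi (phi x)).

Definition refines (S : finType) (pi rho : {set {set S}}) : Prop :=
  forall B, B \in pi -> exists2 C, C \in rho & B \subset C.

Definition asd_le (D D' : asd) : Prop :=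
  exists (phi : st D -> st D') (alpha : {set {set st D}} -> {set {set st D'}}),
    forall pi, pi \in parts D ->
      alpha pi \in parts D' /\ refines (pcomp (alpha pi) phi) pi.

Definition asd_equiv (D D' : asd) : Prop := asd_le D D' /\ asd_le D' D.

(* binary linear device L_n : states {0,1}^n, partitions = kernels of all
   F_2-linear maps {0,1}^n -> {0,1} *)
Definition F2lin (n : nat) (f : {ffun 'rV['F_2]_n -> 'F_2}) : bool :=
  [forall a : 'F_2, forall u : 'rV['F_2]_n, forall v : 'rV['F_2]_n,
     f (a *: u + v) == a * f u + f v].

Definition L (n : nat) : asd :=
  @ASD 'rV['F_2]_n [set kernel (fun x => f x) | f : {ffun 'rV['F_2]_n -> 'F_2} & F2lin f].

(* direct product of a finite family of devices D_0 x ... x D_(m-1):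
   states are tuples, partitions are products of partitions
   pi_0 x ... x pi_(m-1) whose blocks are products B_0 x ... x B_(m-1). *)
Definition prod_state (m : nat) (D : 'I_m -> asd) : finType :=
  {dffun forall i : 'I_m, st (D i)}.

Definition prod_part (m : nat) (D : 'I_m -> asd)
  (p : {dffun forall i : 'I_m, {set {set st (D i)}}}) : {set {set prod_state D}} :=
  [set [set x : prod_state D | [forall i, x i \in B i]]
    | B : {dffun forall i : 'I_m, {set st (D i)}} & [forall i, B i \in p i]].

Definition prod_asd (m : nat) (D : 'I_m -> asd) : asd :=
  @ASD (prod_state D)
    [set prod_part p
      | p : {dffun forall i : 'I_m, {set {set st (D i)}}}
      & [forall i, p i \in parts (D i)]].

From Pilot Require Import Defs.
From mathcomp Require Import all_boot all_order all_algebra all_fingroup.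
From Stdlib Require Import FunctionalExtensionality.
Set Implicit Arguments. Unset Strict Implicit. Unset Printing Implicit Defensive.
Import GRing.Theory Num.Theory.

(* Call a partition of a device maximal if no partition of the device has more
   blocks.  When the partitions of two devices separate states, an equivalence
   between them restricts to a bijection between their maximal partitions that
   preserves the number of blocks of the meet of any two of them: a refinement
   between partitions with equally many blocks is an equality.
   The partitions of L_{k_1} x ... x L_{k_m} are the kernels of the maps
   x |-> (c_i . x_i)_i; the maximal ones, with 2^m blocks, come from the families
   with every c_i nonzero, and two such families c, c' have a meet with
   2^(2m - a) blocks, where a is the number of indices with c_i = c'_i.  Hence m
   is an invariant, and so is the polynomial
     \sum_(c, c') X^a = (\prod_i (2^k_i - 1)) * \prod_i (X + 2^k_i - 2),
   whose roots recover the multiset of the k_i. *)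

Section Kernels.
Variable S : finType.
Implicit Types (pi rho : {set {set S}}) (x y : S).

Lemma kernel_partition (T : finType) (G : S -> T) : partition (kernel G) [set: S].
Proof.
suff -> : kernel G = preim_partition G [set: S] by apply: preim_partitionP.
apply/setP => B; apply/imsetP/imsetP => -[x _ ->]; exists x => //;
  by apply/setP => y; rewrite !inE eq_sym.
Qed.

Lemma pblock_kernel (T : finType) (G : S -> T) x :
  pblock (kernel G) x = [set y | G y == G x].
Proof.
apply: def_pblock; first by case/and3P: (kernel_partition G).
  by apply/imsetP; exists x.
by rewrite inE.
Qed.

Lemma eq_pblock_kernel (T : finType) (G : S -> T) x y :
  (pblock (kernel G) x == pblock (kernel G) y) = (G x == G y).
Proof.
rewrite !pblock_kernel; apply/eqP/eqP => [/setP/(_ x)|E].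
  by rewrite !inE eqxx => /esym/eqP.
by apply/setP => z; rewrite !inE E.
Qed.

Lemma eq_kernel (T : finType) (F G : S -> T) : F =1 G -> kernel F = kernel G.
Proof. by move=> FG; apply: eq_imset => x; apply/setP => y; rewrite !inE !FG. Qed.

Lemma card_imsetT_factor (T1 T2 : finType) (F : S -> T1) (G : S -> T2) :
  (forall x y, F x = F y -> G x = G y) -> #|G @: [set: S]| <= #|F @: [set: S]|.
Proof.
move=> FG; pose P := [set (F x, G x) | x in [set: S]].
have -> : G @: [set: S] = snd @: P by rewrite -imset_comp.
have -> : F @: [set: S] = fst @: P by rewrite -imset_comp.
rewrite [#|fst @: P|]card_in_imset ?leq_imset_card //.
by move=> _ _ /imsetP[x _ ->] /imsetP[y _ ->] /= E; rewrite E (FG _ _ E).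
Qed.

Lemma factor_card_imsetT (T1 T2 : finType) (F : S -> T1) (G : S -> T2) :
  (forall x y, F x = F y -> G x = G y) -> #|F @: [set: S]| <= #|G @: [set: S]| ->
  forall x y, G x = G y -> F x = F y.
Proof.
move=> FG leFG; pose P := [set (F x, G x) | x in [set: S]].
have cardP : #|fst @: P| = #|P|.
  apply: card_in_imset => _ _ /imsetP[x _ ->] /imsetP[y _ ->] /= E.
  by rewrite E (FG _ _ E).
have /imset_injP injG : #|snd @: P| == #|P|.
  by rewrite eqn_leq leq_imset_card -cardP -!imset_comp.
move=> x y Gxy.
have Pz z : (F z, G z) \in P by apply: imset_f; rewrite inE.
by case: (injG _ _ (Pz x) (Pz y) Gxy).
Qed.

Lemma eq_card_imsetT (T1 T2 : finType) (F : S -> T1) (G : S -> T2) :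
  (forall x y, (F x == F y) = (G x == G y)) -> #|F @: [set: S]| = #|G @: [set: S]|.
Proof.
move=> FG; apply/eqP; rewrite eqn_leq !card_imsetT_factor // => x y /eqP.
  by rewrite FG => /eqP.
by rewrite -FG => /eqP.
Qed.

Lemma partition_eq pi rho : partition pi [set: S] -> partition rho [set: S] ->
  (forall x y, (pblock pi x == pblock pi y) = (pblock rho x == pblock rho y)) -> pi = rho.
Proof.
move=> Ppi Prho same.
have blocksE sigma : partition sigma [set: S] -> sigma = [set pblock sigma x | x : S].
  case/and3P => /eqP cov tI n0; apply/setP => B; apply/idP/imsetP => [BP|[x _ ->]].
    have /set0Pn[x xB] : B != set0 by apply: contraNneq n0 => <-.
    by exists x => //; rewrite (def_pblock tI BP xB).
  by apply: pblock_mem; rewrite cov.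
rewrite (blocksE _ Ppi) (blocksE _ Prho); apply: eq_imset => x.
case/and3P: Ppi => /eqP cpi tpi _; case/and3P: Prho => /eqP crho trho _.
by apply/setP => y; rewrite -(eq_pblock _ tpi) ?cpi // -(eq_pblock _ trho) ?crho.
Qed.

Lemma refines_pcompP (S' : finType) pi (rho : {set {set S'}}) (phi : S -> S') :
  partition pi [set: S] -> refines (Defs.pcomp rho phi) pi ->
  forall x y, pblock rho (phi x) = pblock rho (phi y) -> pblock pi x = pblock pi y.
Proof.
case/and3P => _ tI _ ref x y E.
have /ref[C Cpi sub] :
    [set z | pblock rho (phi z) == pblock rho (phi x)] \in Defs.pcomp rho phi.
  by apply/imsetP; exists x.
have xC : x \in C by apply: (subsetP sub); rewrite inE.
have yC : y \in C by apply: (subsetP sub); rewrite inE E.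
by rewrite (def_pblock tI Cpi xC) (def_pblock tI Cpi yC).
Qed.

End Kernels.

Lemma refines_pcomp_kernel (S S' T T' : finType) (G : S -> T) (G' : S' -> T')
    (phi : S -> S') :
  (forall x y, G' (phi x) = G' (phi y) -> G x = G y) ->
  refines (Defs.pcomp (kernel G') phi) (kernel G).
Proof.
move=> G'G B /imsetP[x _ ->]; exists [set y | G y == G x]; first by apply/imsetP; exists x.
by apply/subsetP => y; rewrite !inE /= eq_pblock_kernel => /eqP/G'G ->.
Qed.

Lemma prod_part_kernel (m : nat) (D : 'I_m -> asd) (T : finType)
    (p : {dffun forall i, {set {set st (D i)}}}) (g : forall i, st (D i) -> T) :
  (forall i, p i = kernel (g i)) ->
  prod_part p = kernel (fun x : prod_state D => [ffun i => g i (x i)]).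
Proof.
move=> pE; set G := fun x : prod_state D => [ffun i => g i (x i)].
have fiberE (z : prod_state D) :
    [set x : prod_state D | [forall i, x i \in [set y | g i y == g i (z i)]]]
    = [set x | G x == G z].
  apply/setP => x; rewrite !inE; apply/forallP/eqP => [Exz|/ffunP Exz i].
    by apply/ffunP => i; rewrite !ffunE; apply/eqP; have := Exz i; rewrite inE.
  by have := Exz i; rewrite !ffunE inE => ->.
apply/setP => Z; apply/imsetP/imsetP => [[B] | [z _ ->]].
  rewrite inE => /forallP Bp ->.
  have blockE i : exists z, B i == [set y | g i y == g i z].
    by have := Bp i; rewrite pE => /imsetP[z _ ->]; exists z.
  exists [ffun i => xchoose (blockE i)] => //; rewrite -fiberE.
  apply/setP => x; rewrite !inE; apply: eq_forallb => i; rewrite ffunE.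
  by move: (xchoose _) (xchooseP (blockE i)) => z /eqP ->.
exists [ffun i => [set y | g i y == g i (z i)]]; last first.
  by rewrite -fiberE; apply/setP => x; rewrite !inE; apply: eq_forallb => i; rewrite ffunE.
by rewrite inE; apply/forallP => i; rewrite ffunE pE; apply/imsetP; exists (z i).
Qed.

Definition nblocks (S : finType) (pi : {set {set S}}) := #|pblock pi @: [set: S]|.

Definition nblocks_meet (S : finType) (pi rho : {set {set S}}) :=
  #|(fun x => (pblock pi x, pblock rho x)) @: [set: S]|.

Definition max_nblocks (D : asd) := \max_(pi in parts D) nblocks pi.

Definition maximal_parts (D : asd) := [set pi in parts D | nblocks pi == max_nblocks D].

Definition separating (D : asd) :=
  (forall pi, pi \in parts D -> partition pi [set: st D]) /\
  (forall x y : st D, x != y -> exists2 pi, pi \in parts D & pblock pi x != pblock pi y).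

Lemma nblocks_kernel (S T : finType) (G : S -> T) : nblocks (kernel G) = #|G @: [set: S]|.
Proof. by apply: eq_card_imsetT => x y; rewrite eq_pblock_kernel. Qed.

Definition simulation (D D' : asd) (phi : st D -> st D')
    (alpha : {set {set st D}} -> {set {set st D'}}) :=
  forall pi, pi \in parts D -> alpha pi \in parts D' /\
    forall x y, pblock (alpha pi) (phi x) = pblock (alpha pi) (phi y) ->
      pblock pi x = pblock pi y.

Lemma asd_le_simulation (D D' : asd) : separating D -> asd_le D D' ->
  exists phi alpha, injective phi /\ @simulation D D' phi alpha.
Proof.
move=> [partD sepD] [phi [alpha le_phi]]; exists phi, alpha.
have sim : simulation phi alpha.
  move=> pi piD; have [alpha_pi ref] := le_phi pi piD.
  by split=> //; apply: refines_pcompP ref; apply: partD.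
split=> // x y phixy; apply/eqP; apply: contraT => /sepD[pi piD].
by case/sim: (piD) => _ /(_ x y) ->; rewrite ?phixy ?eqxx.
Qed.

Section Simulation.
Variables (D D' : asd) (phi : st D -> st D') (alpha : {set {set st D}} -> {set {set st D'}}).
Hypothesis sim : simulation phi alpha.

Lemma leq_nblocks_simulation pi : pi \in parts D ->
  nblocks pi <= #|(fun x => pblock (alpha pi) (phi x)) @: [set: st D]| <= nblocks (alpha pi).
Proof.
case/sim=> _ ref; rewrite card_imsetT_factor //=.
by apply/subset_leq_card/subsetP => _ /imsetP[x _ ->]; apply: imset_f.
Qed.

Lemma leq_max_nblocks_simulation : max_nblocks D <= max_nblocks D'.
Proof.
apply/bigmax_leqP => pi piD; have /andP[le1 le2] := leq_nblocks_simulation piD.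
by apply: leq_trans (leq_trans le1 le2) _; apply: leq_bigmax_cond; case: (sim piD).
Qed.

Hypothesis max_nblocksD' : max_nblocks D' <= max_nblocks D.

(* On a maximal partition the inequalities above are equalities, so the
   simulation identifies the blocks of [pi] and of [alpha pi] exactly. *)
Lemma simulation_maximal pi : pi \in maximal_parts D ->
  alpha pi \in maximal_parts D' /\
  forall x y, (pblock pi x == pblock pi y) =
              (pblock (alpha pi) (phi x) == pblock (alpha pi) (phi y)).
Proof.
rewrite inE => /andP[piD /eqP maxpi]; have [alpha_piD ref] := sim piD.
have /andP[le1 le2] := leq_nblocks_simulation piD.
have le3 : nblocks (alpha pi) <= max_nblocks D' by apply: leq_bigmax_cond.
have nbE : nblocks (alpha pi) = nblocks pi.
  apply/eqP; rewrite eqn_leq (leq_trans le1 le2) andbT maxpi.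
  exact: leq_trans le3 max_nblocksD'.
split.
  by rewrite inE alpha_piD eqn_leq le3 nbE maxpi.
move=> x y; apply/eqP/eqP => [|/ref //].
apply: (factor_card_imsetT (F := fun z => pblock (alpha pi) (phi z)) ref).
by rewrite (leq_trans le2) // nbE.
Qed.

Hypothesis partD : forall pi, pi \in parts D -> partition pi [set: st D].

Lemma simulation_inj : {in maximal_parts D &, injective alpha}.
Proof.
move=> pi rho pimax rhomax alpha_eq.
have [[_ Epi] [_ Erho]] := (simulation_maximal pimax, simulation_maximal rhomax).
have maxD sigma : sigma \in maximal_parts D -> sigma \in parts D.
  by rewrite inE => /andP[].
apply: partition_eq; [exact/partD/maxD | exact/partD/maxD | move=> x y].
by rewrite Epi Erho alpha_eq.
Qed.

Lemma nblocks_meet_simulation pi rho :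
  phi @: [set: st D] = [set: st D'] ->
  pi \in maximal_parts D -> rho \in maximal_parts D ->
  nblocks_meet (alpha pi) (alpha rho) = nblocks_meet pi rho.
Proof.
move=> phi_onto /simulation_maximal[_ Epi] /simulation_maximal[_ Erho].
rewrite /nblocks_meet -phi_onto -imset_comp; apply: eq_card_imsetT => x y /=.
by rewrite !xpair_eqE Epi Erho.
Qed.

End Simulation.

Lemma asd_equiv_max_nblocks (D D' : asd) : separating D -> separating D' ->
  asd_equiv D D' -> max_nblocks D = max_nblocks D'.
Proof.
move=> sepD sepD' [/(asd_le_simulation sepD)[phi [alpha [_ sim]]]].
move=> /(asd_le_simulation sepD')[psi [beta [_ sim']]].
by apply/eqP; rewrite eqn_leq (leq_max_nblocks_simulation sim) (leq_max_nblocks_simulation sim').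
Qed.

(* An equivalence matches the maximal partitions of [D] and [D'] bijectively,
   preserving the number of blocks of pairwise meets. *)
Lemma asd_equiv_sum_nblocks_meet (D D' : asd) (R : nmodType) (W : nat -> R) :
  separating D -> separating D' -> asd_equiv D D' ->
  (\sum_(pi in maximal_parts D) \sum_(rho in maximal_parts D) W (nblocks_meet pi rho) =
   \sum_(pi in maximal_parts D') \sum_(rho in maximal_parts D') W (nblocks_meet pi rho))%R.
Proof.
move=> sepD sepD' eqDD'; have maxE := asd_equiv_max_nblocks sepD sepD' eqDD'.
case: eqDD' => /(asd_le_simulation sepD)[phi [alpha [inj_phi sim]]].
move=> /(asd_le_simulation sepD')[psi [beta [inj_psi sim']]].
have maxD' : max_nblocks D' <= max_nblocks D by rewrite maxE.
have maxD : max_nblocks D <= max_nblocks D' by rewrite maxE.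
have [[partD _] [partD' _]] := (sepD, sepD').
have inj_alpha := simulation_inj sim maxD' partD.
have inj_beta := simulation_inj sim' maxD partD'.
have alpha_max pi (pimax : pi \in maximal_parts D) := (simulation_maximal sim maxD' pimax).1.
have beta_max pi (pimax : pi \in maximal_parts D') := (simulation_maximal sim' maxD pimax).1.
have alphaE : alpha @: maximal_parts D = maximal_parts D'.
  apply/eqP; rewrite eqEcard card_in_imset //; apply/andP; split.
    by apply/subsetP => _ /imsetP[pi /alpha_max ? ->].
  rewrite -(card_in_imset inj_beta); apply/subset_leq_card/subsetP.
  by move=> _ /imsetP[pi /beta_max ? ->].
have phi_onto : phi @: [set: st D] = [set: st D'].
  apply/eqP; rewrite eqEcard subsetT card_imset // cardsT cardsT.
  by rewrite -(card_imset _ inj_psi) -cardsT subset_leq_card ?subsetT.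
rewrite -alphaE big_imset //=; apply: eq_bigr => pi pimax.
rewrite big_imset //=; apply: eq_bigr => rho rhomax.
by rewrite (nblocks_meet_simulation sim maxD').
Qed.

Section BigOperators.
Local Open Scope ring_scope.

Lemma sum_setXn_prod (R : comPzSemiRingType) (I : finType) (T : I -> finType)
    (A : forall i, {set T i}) (F : forall i, T i -> R) :
  \sum_(x in setXn A) \prod_i F i (x i) = \prod_i \sum_(t in A i) F i t.
Proof.
pose G i := [ffun t : T i => if t \in A i then F i t else 0].
transitivity (\sum_(x : {dffun forall i, T i}) \prod_i G i (x i)).
  rewrite big_mkcond; apply: eq_bigr => x _; case: setXnP => [Ax | /forallP/forallPn[i Axi]].
    by apply: eq_bigr => i _; rewrite ffunE Ax.
  by rewrite (bigD1 i) //= ffunE (negbTE Axi) mul0r.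
rewrite (reindex (@dffun_of_fprod I T)) /=; last exact/onW_bij/dffun_of_fprod_bij.
transitivity (\sum_(t : fprod T) \prod_(i in I) G i (t i)).
  by apply: eq_bigr => t _; apply: eq_bigr => i _; rewrite !ffunE.
rewrite big_fprod.
transitivity (\prod_i \sum_(j | tagged_with T i j) untag 0 (G i) j).
  by rewrite bigA_distr_big_dep.
apply: eq_bigr => i _; rewrite -(big_tag (fun i (t : T i) => G i t)) [RHS]big_mkcond.
by apply: eq_bigr => t _; rewrite ffunE.
Qed.

Lemma expr_agreement (R : comPzSemiRingType) (x : R) m (b : 'I_m -> bool) :
  x ^+ (2 * m - \sum_i (if b i then 1 else 2))%N = \prod_i (if b i then x else 1).
Proof.
have -> : (2 * m = \sum_(i < m) 2)%N by rewrite sum_nat_const card_ord mulnC.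
rewrite -sumnB => [|i _]; last by case: (b i).
by rewrite -prodrXr; apply: eq_bigr => i _; case: (b i).
Qed.

Lemma sumr_if_eq (R : pzSemiRingType) (T : finType) (A : {set T}) (a : T) (x : R) :
  a \in A -> \sum_(t in A) (if a == t then x else 1) = x + (#|A|.-1)%:R.
Proof.
move=> Aa; rewrite (bigD1 a) //= eqxx; congr (_ + _).
rewrite (eq_bigr (fun _ => 1)) => [|t /andP[_ /negbTE]]; last by rewrite eq_sym => ->.
by rewrite sumr_const (cardD1x Aa).
Qed.

Lemma prod_XsubC_perm (F : fieldType) (T : eqType) m (h : T -> F) (a b : 'I_m -> T) :
  injective h ->
  \prod_i ('X - (h (a i))%:P) = \prod_i ('X - (h (b i))%:P) ->
  exists g : 'S_m, forall i, a i = b (g i).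
Proof.
move=> h_inj abE.
have prodE (c : 'I_m -> T) :
    \prod_(x <- map h [tuple c i | i < m]) ('X - x%:P) = \prod_i ('X - (h (c i))%:P).
  by rewrite big_map big_tuple; apply: eq_bigr => i _; rewrite tnth_mktuple.
have /tuple_permP[g abg] : perm_eq [tuple a i | i < m] [tuple b i | i < m].
  by apply: (perm_map_inj h_inj); apply: prod_XsubC_eq; rewrite !prodE.
exists g => i; have := congr1 (fun t : m.-tuple T => tnth t i) (val_inj abg).
by rewrite /= !tnth_mktuple.
Qed.

Lemma scaled_monic_inj (R : idomainType) (a b : R) (p q : {poly R}) :
  p \is monic -> q \is monic -> a != 0 -> a%:P * p = b%:P * q -> p = q.
Proof.
move=> p_monic q_monic a_neq0 apbq.
have ab : a = b by have := congr1 lead_coef apbq; rewrite !lead_coef_Mmonic // !lead_coefC.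
by apply: (mulfI (_ : a%:P != 0)); rewrite ?polyC_eq0 // apbq ab.
Qed.

End BigOperators.

Section LinearForms.
Local Open Scope ring_scope.
Variable k : nat.
Implicit Types (c : 'cV['F_2]_k) (x u v : 'rV['F_2]_k).

Lemma F2_cases (a : 'F_2) : a = 0 \/ a = 1.
Proof. by case: a => -[|[|]] //= a_lt2; [left|right]; apply/val_inj. Qed.

Definition lform c x : 'F_2 := (x *m c) 0 0.

Lemma lformD c u v : lform c (u + v) = lform c u + lform c v.
Proof. by rewrite /lform mulmxDl mxE. Qed.

Lemma lformZ c a u : lform c (a *: u) = a * lform c u.
Proof. by rewrite /lform -scalemxAl mxE. Qed.

Lemma lform0 c : lform c 0 = 0.
Proof. by rewrite /lform mul0mx mxE. Qed.

Lemma lform_delta c j : lform c (delta_mx 0 j) = c j 0.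
Proof. by rewrite /lform -rowE mxE. Qed.

Lemma lform_delta_col x j : lform (delta_mx j 0) x = x 0 j.
Proof. by rewrite /lform -colE mxE. Qed.

Lemma F2lin_lform c : F2lin [ffun x => lform c x].
Proof. by apply/'forall_'forall_forallP => a u v; rewrite !ffunE lformD lformZ. Qed.

Lemma F2lin_lformE (f : {ffun 'rV['F_2]_k -> 'F_2}) :
  F2lin f -> f =1 lform (\col_j f (delta_mx 0 j)).
Proof.
move=> /'forall_'forall_forallP/(_ _ _ _)/eqP fE.
have f0 : f 0 = 0.
  by apply: (addIr (f 0)); have := fE 1 0 0; rewrite scale1r addr0 mul1r add0r => /esym.
have fD : {morph f : u v / u + v}.
  by move=> u v; have := fE 1 u v; rewrite scale1r mul1r.
move=> x; rewrite {1}(row_sum_delta x) (big_morph f fD f0) /lform mxE.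
by apply: eq_bigr => j _; rewrite -[_ *: _]addr0 fE f0 addr0 mxE.
Qed.

Lemma col_neq0P c : c != 0 -> exists j, c j 0 = 1.
Proof.
move=> c_neq0; have /existsP[j cj] : [exists j, c j 0 != 0].
  apply: contraNT c_neq0 => /existsPn c0.
  by apply/eqP/colP => j; rewrite mxE; apply/eqP/negPn/c0.
by exists j; case: (F2_cases (c j 0)) cj => // ->; rewrite eqxx.
Qed.

Lemma lform_separate c0 c1 : c0 != c1 -> c1 != 0 ->
  exists u, lform c0 u = 0 /\ lform c1 u = 1.
Proof.
move=> c01 /col_neq0P[l c1l].
have /existsP[j cj] : [exists j, c0 j 0 != c1 j 0].
  by apply: contraNT c01 => /existsPn c01; apply/eqP/colP => j; apply/eqP/negPn/c01.
have [c0j|c0j] := F2_cases (c0 j 0); have [c1j|c1j] := F2_cases (c1 j 0);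
  rewrite c0j c1j ?eqxx // in cj.
  by exists (delta_mx 0 j); rewrite !lform_delta.
have [c0l|c0l] := F2_cases (c0 l 0); first by exists (delta_mx 0 l); rewrite !lform_delta.
exists (delta_mx 0 l + delta_mx 0 j).
by rewrite !lformD !lform_delta c0j c1j c0l c1l addr0; split=> //; apply/val_inj.
Qed.

Lemma card_lform_pairs c0 c1 : c0 != 0 -> c1 != 0 ->
  #|[set (lform c0 v, lform c1 v) | v : 'rV['F_2]_k]| =
  (2 ^ (if c0 == c1 then 1 else 2))%N.
Proof.
move=> c0_neq0 c1_neq0; case: eqP => [<-|/eqP c01].
  have [j c0j] := col_neq0P c0_neq0.
  suff -> : [set (lform c0 v, lform c0 v) | v : 'rV['F_2]_k] = [set (0, 0); (1, 1)].
    by rewrite cards2 xpair_eqE eq_sym oner_eq0.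
  apply/setP => -[a b]; rewrite !inE; apply/imsetP/orP => [[v _ [-> ->]]|].
    by case: (F2_cases (lform c0 v)) => ->; [left|right].
  case=> /eqP[-> ->]; first by exists 0; rewrite ?lform0.
  by exists (delta_mx 0 j); rewrite ?lform_delta ?c0j.
have [u0 [u0c0 u0c1]] := lform_separate c01 c1_neq0.
have [u1 [u1c1 u1c0]] := lform_separate (contra_neq esym c01) c0_neq0.
suff -> : [set (lform c0 v, lform c1 v) | v : 'rV['F_2]_k] = [set: 'F_2 * 'F_2].
  by rewrite cardsT card_prod card_Fp.
apply/setP => -[a b]; rewrite inE; apply/imsetP; exists (a *: u1 + b *: u0) => //.
by rewrite !lformD !lformZ u0c0 u0c1 u1c1 u1c0 !mulr1 !mulr0 addr0 add0r.
Qed.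

End LinearForms.

Section ProductOfLinearDevices.
Local Open Scope ring_scope.
Variables (m : nat) (k : 'I_m -> nat).
Local Notation PL := (prod_asd (fun i => L (k i))).

Definition coefs := {dffun forall i : 'I_m, 'cV['F_2]_(k i)}.

Definition lforms (c : coefs) (x : st PL) : {ffun 'I_m -> 'F_2} :=
  [ffun i => lform (c i) (x i)].

Definition nonzero_coefs := setXn (fun i => [set t : 'cV['F_2]_(k i) | t != 0]).

Lemma parts_prodL : parts PL = [set kernel (lforms c) | c : coefs].
Proof.
have prodE (c : coefs) (p : {dffun forall i, {set {set st (L (k i))}}}) :
    (forall i, p i = kernel (lform (c i))) -> prod_part p = kernel (lforms c).
  by move/prod_part_kernel->.
apply/setP => pi; apply/imsetP/imsetP => [[p] | [c _ ->]]; last first.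
  exists [ffun i => kernel (lform (c i)) : {set {set st (L (k i))}}].
    rewrite inE; apply/forallP => i; rewrite ffunE; apply/imsetP.
    exists [ffun x => lform (c i) x]; first by rewrite inE F2lin_lform.
    by apply: eq_kernel => x; rewrite ffunE.
  by rewrite (prodE c) // => i; rewrite ffunE.
rewrite inE => /forallP pP ->.
have pE i : exists f : {ffun 'rV['F_2]_(k i) -> 'F_2}, F2lin f && (p i == kernel f).
  by have /imsetP[f] := pP i; rewrite inE => f_lin ->; exists f; rewrite f_lin eqxx.
exists [ffun i => \col_j (xchoose (pE i)) (delta_mx 0 j)] => //.
apply: prodE => i; rewrite ffunE.
move: (xchoose _) (xchooseP (pE i)) => f /andP[f_lin /eqP ->].
exact/eq_kernel/F2lin_lformE.
Qed.

Lemma separating_prodL : separating PL.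
Proof.
split=> [pi | x y xy].
  by rewrite parts_prodL => /imsetP[c _ ->]; apply: kernel_partition.
have /existsP[i xyi] : [exists i, x i != y i].
  by apply: contraNT xy => /existsPn xy_i; apply/eqP/ffunP => i; apply/eqP/negPn/xy_i.
have /existsP[j xyij] : [exists j, (x i : 'rV_(k i)) 0 j != (y i : 'rV_(k i)) 0 j].
  by apply: contraNT xyi => /existsPn xy_ij; apply/eqP/rowP => j; apply/eqP/negPn/xy_ij.
pose c : coefs :=
  [ffun l => dfwith (fun l => 0 : 'cV['F_2]_(k l)) (delta_mx j 0 : 'cV_(k i)) l].
exists (kernel (lforms c)); first by rewrite parts_prodL; apply/imsetP; exists c.
rewrite eq_pblock_kernel; apply: contra xyij => /eqP/ffunP/(_ i).
by rewrite !ffunE dfwith_in !lform_delta_col => ->.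
Qed.

Lemma card_lforms_image (c : coefs) :
  (#|lforms c @: [set: st PL]| <= 2 ^ m ?= iff (c \in nonzero_coefs))%N.
Proof.
have card_ffunF2 : #|{ffun 'I_m -> 'F_2}| = (2 ^ m)%N.
  by rewrite card_ffun card_Fp // card_ord.
split; first by rewrite -card_ffunF2 max_card.
case: setXnP => [c_neq0 | /forallP/forallPn[i]]; last first.
  rewrite inE negbK => /eqP ci0; apply/negbTE; rewrite neq_ltn; apply/orP; left.
  apply: (@leq_ltn_trans #|[set~ [ffun=> 1] : {ffun 'I_m -> 'F_2}]|).
    apply/subset_leq_card/subsetP => _ /imsetP[x _ ->]; rewrite !inE.
    apply/eqP => /ffunP/(_ i); rewrite !ffunE ci0 /lform mulmx0 mxE => /eqP.
    by rewrite eq_sym oner_eq0.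
  by rewrite cardsC1 card_ffunF2 prednK ?expn_gt0.
suff -> : lforms c @: [set: st PL] = [set: {ffun 'I_m -> 'F_2}].
  by rewrite cardsT card_ffunF2 eqxx.
apply/setP => t; rewrite inE; apply/imsetP.
have cE i : exists j, c i j 0 == 1.
  by have := c_neq0 i; rewrite inE => /col_neq0P[j /eqP]; exists j.
exists [ffun i => (t i *: delta_mx 0 (xchoose (cE i)) : 'rV_(k i))] => //.
by apply/ffunP => i; rewrite !ffunE lformZ lform_delta (eqP (xchooseP (cE i))) mulr1.
Qed.

Lemma kernel_lforms_inj : injective (fun c => kernel (lforms c)).
Proof.
move=> c c' /= cc'; apply/ffunP => i; apply/colP => j.
pose z : st PL := [ffun l => 0].
pose x : st PL :=
  [ffun l => dfwith (fun l => 0 : 'rV['F_2]_(k l)) (delta_mx 0 j : 'rV_(k i)) l].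
have lforms_x (d : coefs) : (lforms d x == lforms d z) = (d i j 0 == 0).
  apply/eqP/eqP => [/ffunP/(_ i) | dij0].
    by rewrite !ffunE dfwith_in lform_delta lform0.
  apply/ffunP => l; rewrite !ffunE lform0.
  by case: dfwithP => [|l' _]; rewrite ?lform_delta ?lform0.
have := congr1 (fun pi => pblock pi x == pblock pi z) cc'.
rewrite /= !eq_pblock_kernel !lforms_x.
by case: (F2_cases (c i j 0)) => ->; case: (F2_cases (c' i j 0)) => ->;
  rewrite ?eqxx ?oner_eq0.
Qed.

Lemma nblocks_meet_lforms (c c' : coefs) :
  c \in nonzero_coefs -> c' \in nonzero_coefs ->
  nblocks_meet (kernel (lforms c)) (kernel (lforms c')) =
  (2 ^ (\sum_i (if c i == c' i then 1 else 2)))%N.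
Proof.
move=> /setXnP c_neq0 /setXnP c'_neq0.
pose pairs i := [set (lform (c i) v, lform (c' i) v) | v : 'rV['F_2]_(k i)].
pose G (x : st PL) := [ffun i => (lform (c i) (x i), lform (c' i) (x i))].
transitivity #|G @: [set: st PL]|.
  apply: eq_card_imsetT => x y; rewrite xpair_eqE !eq_pblock_kernel.
  apply/andP/eqP => [[/eqP/ffunP E /eqP/ffunP E'] | /ffunP E].
    by apply/ffunP => i; move: (E i) (E' i); rewrite !ffunE => -> ->.
  by split; apply/eqP/ffunP => i; move: (E i); rewrite !ffunE => -[].
have -> : G @: [set: st PL] = setXn pairs.
  apply/setP => t; apply/imsetP/setXnP => [[x _ ->] i | tP].
    by rewrite ffunE; apply: imset_f.
  have tE i : exists v, t i == (lform (c i) v, lform (c' i) v).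
    by have /imsetP[v _ ->] := tP i; exists v.
  exists [ffun i => xchoose (tE i)] => //.
  by apply/ffunP => i; rewrite !ffunE; exact/eqP/(xchooseP (tE i)).
rewrite cardsXn expn_sum; apply: eq_bigr => i _.
by move: (c_neq0 i) (c'_neq0 i); rewrite !inE => ci ci'; rewrite card_lform_pairs.
Qed.

Lemma card_nonzero_coefs : #|nonzero_coefs| = (\prod_i (2 ^ k i - 1))%N.
Proof.
rewrite cardsXn; apply: eq_bigr => i _.
by rewrite cardsE cardC1 card_mx card_Fp // muln1 subn1.
Qed.

Hypothesis k_gt0 : forall i, (0 < k i)%N.

Lemma max_nblocks_prodL : max_nblocks PL = (2 ^ m)%N.
Proof.
apply/eqP; rewrite eqn_leq; apply/andP; split.
  apply/bigmax_leqP => pi; rewrite parts_prodL => /imsetP[c _ ->].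
  by rewrite nblocks_kernel card_lforms_image.
pose c : coefs := [ffun i => const_mx 1].
have c_neq0 : c \in nonzero_coefs.
  apply/setXnP => i; rewrite !inE ffunE.
  by apply/eqP => /matrixP/(_ (Ordinal (k_gt0 i)) 0)/eqP; rewrite !mxE oner_eq0.
have <- : nblocks (kernel (lforms c)) = (2 ^ m)%N.
  by apply/eqP; rewrite nblocks_kernel (card_lforms_image c).2.
by apply: leq_bigmax_cond; rewrite parts_prodL imset_f.
Qed.

Lemma maximal_parts_prodL :
  maximal_parts PL = [set kernel (lforms c) | c in nonzero_coefs].
Proof.
apply/setP => pi; rewrite inE max_nblocks_prodL parts_prodL.
apply/andP/imsetP => [[/imsetP[c _ ->]] | [c c_neq0 ->]].
  by rewrite nblocks_kernel (card_lforms_image c).2 => c_neq0; exists c.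
by rewrite nblocks_kernel (card_lforms_image c).2 c_neq0 imset_f.
Qed.

End ProductOfLinearDevices.

Lemma asd_le_prodL_perm m (r : 'I_m -> nat) (g : 'S_m) :
  asd_le (prod_asd (fun i => L (r i))) (prod_asd (fun i => L (r (g i)))).
Proof.
pose phi (x : st (prod_asd (fun i => L (r i)))) : st (prod_asd (fun i => L (r (g i)))) :=
  [ffun i => x (g i)].
pose permc (c : coefs r) : coefs (fun i => r (g i)) := [ffun i => c (g i)].
exists phi, (fun pi => if [pick c | pi == kernel (lforms c)] is Some c
                     then kernel (lforms (permc c)) else set0).
move=> pi; rewrite parts_prodL => /imsetP[c0 _ pi_c0].
case: pickP => [c /eqP ->|]; last by move/(_ c0); rewrite pi_c0 eqxx.
split; first by rewrite parts_prodL imset_f.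
apply: refines_pcomp_kernel => x y /ffunP xy; apply/ffunP => j.
by have := xy (g^-1 j)%g; rewrite !ffunE permKV.
Qed.

Section AgreementPolynomial.
Local Open Scope ring_scope.

Definition agreement_root (n : nat) : rat := 2%:R - (2 ^ n)%:R.

Lemma agreement_root_inj : injective agreement_root.
Proof. by move=> a b /addrI/oppr_inj/eqP; rewrite eqr_nat => /eqP/expnI; apply. Qed.

Variables (m : nat) (k : 'I_m -> nat).
Hypothesis k_gt0 : forall i, (0 < k i)%N.
Local Notation PL := (prod_asd (fun i => L (k i))).

(* The weight turns a meet with 2^(2m - a) blocks into X^a, where a counts the
   factors on which the two coefficient families agree. *)
Lemma sum_agreement_prodL :
  \sum_(pi in maximal_parts PL) \sum_(rho in maximal_parts PL)
     'X^(2 * m - logn 2 (nblocks_meet pi rho)) =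
  (\prod_i (2 ^ k i - 1))%N%:R * \prod_i ('X - (agreement_root (k i))%:P) :> {poly rat}.
Proof.
have inj : {in nonzero_coefs k &, injective (fun c => kernel (lforms c))}.
  exact: in2W (@kernel_lforms_inj m k).
rewrite maximal_parts_prodL // big_imset //=.
under eq_bigr => c c_neq0.
  rewrite big_imset //=.
  under eq_bigr => c' c'_neq0 do
    rewrite nblocks_meet_lforms // pfactorK // expr_agreement.
  rewrite (sum_setXn_prod _ (fun i t => if c i == t then 'X else 1)).
  under eq_bigr => i _.
    rewrite sumr_if_eq; last by move/setXnP: c_neq0.
    rewrite cardsE cardC1 card_mx card_Fp // muln1.
    over.
  over.
rewrite sumr_const card_nonzero_coefs mulr_natl; congr (_ *+ _).
apply: eq_bigr => i _; rewrite /agreement_root polyCB opprB -!polyC_natr addrC.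
by rewrite -subn2 natrB ?polyCB 1?addrC // -{1}(expn0 2) ltn_exp2l.
Qed.

End AgreementPolynomial.

Lemma prodL_equiv_perm m n (k : 'I_m -> nat) (r : 'I_n -> nat) :
  (forall i, 0 < k i) -> (forall j, 0 < r j) ->
  asd_equiv (prod_asd (fun i => L (k i))) (prod_asd (fun j => L (r j))) ->
  exists (e : m = n) (g : 'S_m), forall i, k i = r (cast_ord e (g i)).
Proof.
move=> k_gt0 r_gt0 kr; have [sep_k sep_r] := (separating_prodL k, separating_prodL r).
have mn : m = n.
  apply/eqP; rewrite -(eqn_exp2l _ _ (ltnSn 1)) -(max_nblocks_prodL k_gt0).
  by rewrite -(max_nblocks_prodL r_gt0) (asd_equiv_max_nblocks sep_k sep_r kr).
subst n; exists erefl.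
pose W j := ('X^(2 * m - logn 2 j) : {poly rat})%R.
have := asd_equiv_sum_nblocks_meet W sep_k sep_r kr.
rewrite !sum_agreement_prodL // -!polyC_natr => /scaled_monic_inj kr_prod.
have monic_roots (s : 'I_m -> nat) :
    (\prod_i ('X - (agreement_root (s i))%:P) \is monic)%R.
  by apply: monic_prod => i _; apply: monicXsubC.
have [|g kr_g] :=
  prod_XsubC_perm agreement_root_inj (kr_prod (monic_roots k) (monic_roots r) _).
  rewrite pnatr_eq0 -lt0n prodn_gt0 // => i.
  by rewrite subn_gt0 -{1}(expn0 2) ltn_exp2l.
by exists g => i; rewrite cast_ord_id.
Qed.

Theorem corollary1 (m n : nat) (k : 'I_m -> nat) (r : 'I_n -> nat) :
  (forall i, 0 < k i) -> (forall j, 0 < r j) ->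
  (asd_equiv (prod_asd (fun i => L (k i))) (prod_asd (fun j => L (r j)))
   <-> exists (e : m = n) (g : 'S_m), forall i, k i = r (cast_ord e (g i))).
Proof.
move=> k_gt0 r_gt0; split; first exact: prodL_equiv_perm.
case=> e [g kr_g]; subst n.
have -> : k = (fun i => r (g i)).
  by apply: functional_extensionality => i; rewrite kr_g cast_ord_id.
split; last exact: asd_le_prodL_perm.
have rgg : (fun i => L (r (g (g^-1 i)%g))) = (fun i => L (r i)).
  by apply: functional_extensionality => i; rewrite permKV.
by have := asd_le_prodL_perm (fun i => r (g i)) g^-1; rewrite /= rgg.
Qed.
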